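(* Let $\Gamma$ be a numerical semigroup, let $e'\in\Gamma\setminus\{0\}$ and $\Gamma_{e'}=\{0\}\cup(e'+\Gamma)$. For any $m\in\Gamma$, \[ \mathrm{Ap}(\Gamma_{e'},e'+m)=(e'+\mathrm{Ap}(\Gamma,m))\cup\big(e'+m+(\mathrm{Ap}(\Gamma,e')\setminus\{0\})\big)\cup\{0\}. \]
   Context: A numerical semigroup is a subset of $\mathbb N$ containing $0$, closed under addition, with finite complement. For a numerical semigroup $S$ and $x\in\mathbb Z$, $\mathrm{Ap}(S,x)=\{s\in S: s-x\notin S\}$. *)

From Stdlib Require Import Arith Lia.

Definition numerical_semigroup (S : nat -> Prop) : Prop :=
  S 0 /\ (forall a b, S a -> S b -> S (a + b)) /\
  exists N, forall n, N <= n -> S n.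

(* Ap(S, x) = { s in S : s - x notin S }, where s - x is an integer;
   for x : nat, s - x notin S iff s < x or (x <= s and S (s - x) fails). *)
Definition Apery (S : nat -> Prop) (x : nat) (s : nat) : Prop :=
  S s /\ ~ (x <= s /\ S (s - x)).

Definition shifted (S : nat -> Prop) (e : nat) (n : nat) : Prop :=
  n = 0 \/ exists g, S g /\ n = e + g.

From Stdlib Require Import Arith Lia Classical.

(* Write n = e + g with g in G.  Since n - (e + m) = g - m, the element n lies
   in Ap(G_e, e + m) exactly when g - m is not in {0} u (e + G).  If g - m is
   not in G at all, then g is in Ap(G, m); otherwise b = g - m is an element
   of G outside {0} u (e + G), which is precisely b in Ap(G, e) \ {0}. *)

Lemma shifted_iff (S : nat -> Prop) (e n : nat) :
  shifted S e n <-> n = 0 \/ (e <= n /\ S (n - e)).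
Proof.
  unfold shifted. split.
  - intros [Hn | [g [Hg ->]]]; [now left |].
    right. split; [lia |]. now replace (e + g - e) with g by lia.
  - intros [Hn | [Hle Hs]]; [now left |].
    right. exists (n - e). split; [exact Hs | lia].
Qed.

Lemma Apery_nonzero_iff (S : nat -> Prop) (e b : nat) :
  Apery S e b /\ b <> 0 <-> S b /\ ~ shifted S e b.
Proof.
  unfold Apery. rewrite shifted_iff. tauto.
Qed.

Lemma shifted_subset (S : nat -> Prop) (e n : nat) :
  S 0 -> (forall a b, S a -> S b -> S (a + b)) -> S e ->
  shifted S e n -> S n.
Proof.
  intros S0 Sadd Se [-> | [g [Sg ->]]]; [exact S0 | now apply Sadd].
Qed.

Lemma Apery_shifted_shift (S : nat -> Prop) (e m g : nat) :
  S g ->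
  Apery (shifted S e) (e + m) (e + g) <-> ~ (m <= g /\ shifted S e (g - m)).
Proof.
  intros Sg. unfold Apery.
  replace (e + g - (e + m)) with (g - m) by lia.
  assert (Hin : shifted S e (e + g)) by (right; now exists g).
  split.
  - intros [_ Hnot] [Hle Hs]. apply Hnot. split; [lia | exact Hs].
  - intros Hnot. split; [exact Hin |].
    intros [Hle Hs]. apply Hnot. split; [lia | exact Hs].
Qed.

Lemma Apery_shifted_0 (S : nat -> Prop) (e m : nat) :
  e <> 0 -> Apery (shifted S e) (e + m) 0.
Proof.
  intros He. split; [now left | lia].
Qed.

Theorem proposition3p2 (G : nat -> Prop) (e m : nat) :
  numerical_semigroup G -> G e -> e <> 0 -> G m ->
  forall n : nat,
    Apery (shifted G e) (e + m) n <->
    ((exists a, Apery G m a /\ n = e + a) \/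
     (exists b, Apery G e b /\ b <> 0 /\ n = e + m + b) \/
     n = 0).
Proof.
  intros [G0 [Gadd _]] Ge He Gm n. split.
  - intros Hn. destruct (proj1 Hn) as [-> | [g [Gg ->]]]; [now right; right |].
    apply (Apery_shifted_shift _ _ _ _ Gg) in Hn.
    destruct (classic (m <= g /\ G (g - m))) as [[Hmg Gb] | Hg].
    + right; left. exists (g - m).
      assert (Hb : Apery G e (g - m) /\ g - m <> 0).
      { apply Apery_nonzero_iff. split; [exact Gb | intros Hs; now apply Hn]. }
      destruct Hb as [HAp Hb0]. split; [exact HAp | split; [exact Hb0 | lia]].
    + left. exists g. split; [split; assumption | reflexivity].
  - intros [[a [[Ga Ha] ->]] | [[b [HAp [Hb0 ->]]] | ->]].
    + apply Apery_shifted_shift; [exact Ga |]. intros [Hma Hs].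
      apply Ha. split; [exact Hma | exact (shifted_subset _ _ _ G0 Gadd Ge Hs)].
    + destruct (proj1 (Apery_nonzero_iff _ _ _) (conj HAp Hb0)) as [Gb Hs].
      rewrite <- Nat.add_assoc. apply Apery_shifted_shift; [now apply Gadd |].
      replace (m + b - m) with b by lia. now intros [_ Hsb].
    + now apply Apery_shifted_0.
Qed.
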